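(* Let $N, M_1, M_2, P, R_1, R_2, \widetilde{M}_2, \widetilde{P}$ be positive integers with $\widetilde{M}_2 \le M_2$, $\widetilde{P}\le P$. Let $\mathbf{y}\in\mathbb{C}^N$, $\mathbf{H}\in\mathbb{C}^{N\times M_1}$ and $\mathcal{M}\in\mathbb{R}^{N\times M_2\times P}$ be as in the context. Let $\mathbf{U}_2\in\mathbb{R}^{M_2\times\widetilde{M}_2}$ and $\mathbf{U}_3\in\mathbb{R}^{P\times\widetilde{P}}$ have orthonormal columns, and set $\widetilde{\mathcal{M}}=\mathcal{M}\times_2\mathbf{U}_2^\top\times_3\mathbf{U}_3^\top$ and $\widehat{\mathcal{M}}=\mathcal{M}\times_2\mathbf{U}_2\mathbf{U}_2^\top\times_3\mathbf{U}_3\mathbf{U}_3^\top$. Suppose $(\mathbf{A}^\star,\mathcal{B}^\star,\mathbf{C}^\star)$, with $\mathbf{A}^\star\in\mathbb{C}^{M_1\times R_1}$, $\mathcal{B}^\star\in\mathbb{C}^{R_1\times M_2\times R_2}$, $\mathbf{C}^\star\in\mathbb{C}^{R_2\times P}$, attains $$m_{\mathrm{TT}}:=\min_{\mathbf{A},\mathcal{B},\mathbf{C}}\Big\|\mathbf{y}-\sum_{r_1=1}^{R_1}\sum_{r_2=1}^{R_2} \mathbf{H}\mathbf{A}_{:r_1}\odot\big(\mathcal{M}\times_2\mathcal{B}_{r_1:r_2}\times_3\mathbf{C}_{r_2:}\big)\Big\|_F$$ over $\mathbf{A}\in\mathbb{C}^{M_1\times R_1},\mathcal{B}\in\mathbb{C}^{R_1\times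 M_2\times R_2},\mathbf{C}\in\mathbb{C}^{R_2\times P}$. Then $$\inf_{\substack{\mathbf{A}\in\mathbb{C}^{M_1\times R_1}\\ \widetilde{\mathcal{B}}\in\mathbb{C}^{R_1\times\widetilde{M}_2\times R_2}\\ \widetilde{\mathbf{C}}\in\mathbb{C}^{R_2\times\widetilde{P}}}}\Big\|\mathbf{y}-\sum_{r_1=1}^{R_1}\sum_{r_2=1}^{R_2} \mathbf{H}\mathbf{A}_{:r_1}\odot\big(\widetilde{\mathcal{M}}\times_2\widetilde{\mathcal{B}}_{r_1:r_2}\times_3\widetilde{\mathbf{C}}_{r_2:}\big)\Big\|_F \le m_{\mathrm{TT}}+\|\mathcal{M}-\widehat{\mathcal{M}}\|_F\sum_{r_1=1}^{R_1}\sum_{r_2=1}^{R_2}\|\mathbf{H}\mathbf{A}^\star_{:r_1}\|_\infty\|\mathcal{B}^\star_{r_1:r_2}\|_F\|\mathbf{C}^\star_{r_2:}\|_F.$$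
   Context: Let $x(t)$, $t\in\mathbb{Z}$, be a complex-valued input signal and $y(t)$ a complex-valued output signal, $t_0\in\mathbb{Z}$. Define $\mathbf{y}=(y(t_0),\dots,y(t_0+N-1))^\top\in\mathbb{C}^N$; $\mathbf{H}\in\mathbb{C}^{N\times M_1}$ with entries $h_{ni}=x(t_0+n-i)$ ($n=0,\dots,N-1$, $i=0,\dots,M_1-1$); and $\mathcal{M}\in\mathbb{R}^{N\times M_2\times P}$ with entries $\mathcal{M}_{njp}=|x(t_0+n-j)|^p$ ($j=0,\dots,M_2-1$, $p=0,\dots,P-1$, with $0^0=1$). Mode-$k$ product of a tensor $\mathcal{X}\in\mathbb{C}^{I_1\times I_2\times I_3}$ with a matrix $\mathbf{Q}\in\mathbb{C}^{n\times I_k}$: replace mode $k$ by $n$ with $(\mathcal{X}\times_k\mathbf{Q})_{\dots j\dots}=\sum_{i_k}\mathcal{X}_{\dots i_k\dots}q_{j i_k}$ (no conjugation). Mode-$k$ product with a vector $\mathbf{v}\in\mathbb{C}^{I_k}$ contracts mode $k$: $(\mathcal{X}\times_k\mathbf{v})=\sum_{i_k}\mathcal{X}_{\dots i_k\dots}v_{i_k}$, removing that mode; in particular $(\mathcal{M}\times_2\mathbf{b}\times_3\mathbf{c})_n=\sum_{j,p}\mathcal{M}_{njp}b_jc_p$. $\mathbf{A}_{:r}$ is the $r$-th column and $\mathbf{C}_{r:}$ the $r$-th row (as a vector) of a matrix; $\mathcal{B}_{r_1:r_2}\in\mathbb{C}^{M_2}$ is the mode-2 fiber of $\mathcal{B}$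 with first index $r_1$ and third index $r_2$. $\odot$ is the entrywise (Hadamard) product; $\|\cdot\|_F$ is the Frobenius (Euclidean for vectors) norm; $\|\cdot\|_\infty$ is the maximum modulus of the entries of a vector. *)

From HB Require Import structures.
From mathcomp Require Import all_boot all_order all_algebra.
From mathcomp Require Import complex.
From mathcomp Require Import classical_sets reals.
Set Implicit Arguments. Unset Strict Implicit. Unset Printing Implicit Defensive.
Import Order.TTheory GRing.Theory Num.Theory.
Local Open Scope ring_scope.

Section Defs.
Variable R : realType.
Local Notation C := (complex R).

Definition rc (r : R) : C := Complex r 0.
Definition cabs (z : C) : R := Normc.normc z.

Definition yvec (N : nat) (y : int -> C) (t0 : int) : 'I_N -> C :=
  fun n => y (t0 + (n : nat)%:Z).

Definition Hmat (N M1 : nat) (x : int -> C) (t0 : int) : 'M[C]_(N, M1) :=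
  \matrix_(n < N, i < M1) x (t0 + (n : nat)%:Z - (i : nat)%:Z).

(* M_{n j p} = |x(t0 + n - j)|^p  (with 0^0 = 1) *)
Definition Mten (N M2 P : nat) (x : int -> C) (t0 : int) :
  'I_N -> 'I_M2 -> 'I_P -> R :=
  fun n j p => cabs (x (t0 + (n : nat)%:Z - (j : nat)%:Z)) ^+ (p : nat).

Definition mode23 (N J K : nat) (T : 'I_N -> 'I_J -> 'I_K -> R)
  (b : 'I_J -> C) (c : 'I_K -> C) : 'I_N -> C :=
  fun n => \sum_(j < J) \sum_(p < K) rc (T n j p) * b j * c p.

(* T x_2 Q2 x_3 Q3, with (T x_k Q)_{..j..} = sum_i T_{..i..} Q_{j i} *)
Definition mode23mat (N J K J' K' : nat) (T : 'I_N -> 'I_J -> 'I_K -> R)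
  (Q2 : 'M[R]_(J', J)) (Q3 : 'M[R]_(K', K)) : 'I_N -> 'I_J' -> 'I_K' -> R :=
  fun n j' p' => \sum_(j < J) \sum_(p < K) T n j p * Q2 j' j * Q3 p' p.

Definition model (N M1 J K R1 R2 : nat) (H : 'M[C]_(N, M1))
  (T : 'I_N -> 'I_J -> 'I_K -> R) (A : 'M[C]_(M1, R1))
  (B : 'I_R1 -> 'I_J -> 'I_R2 -> C) (Cm : 'M[C]_(R2, K)) : 'I_N -> C :=
  fun n => \sum_(r1 < R1) \sum_(r2 < R2)
     (H *m A) n r1 * mode23 T (fun j => B r1 j r2) (fun p => Cm r2 p) n.

Definition normFv (N : nat) (v : 'I_N -> C) : R :=
  Num.sqrt (\sum_(n < N) cabs (v n) ^+ 2).

Definition normF3 (N J K : nat) (T : 'I_N -> 'I_J -> 'I_K -> R) : R :=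
  Num.sqrt (\sum_(n < N) \sum_(j < J) \sum_(p < K) T n j p ^+ 2).

Definition normInf (N : nat) (v : 'I_N -> C) : R :=
  \big[Num.max/0]_(n < N) cabs (v n).

Definition residual (N M1 J K R1 R2 : nat) (yv : 'I_N -> C) (H : 'M[C]_(N, M1))
  (T : 'I_N -> 'I_J -> 'I_K -> R) (A : 'M[C]_(M1, R1))
  (B : 'I_R1 -> 'I_J -> 'I_R2 -> C) (Cm : 'M[C]_(R2, K)) : R :=
  normFv (fun n => yv n - model H T A B Cm n).

End Defs.

From HB Require Import structures.
From mathcomp Require Import all_boot all_order all_algebra.
From mathcomp Require Import complex.
From mathcomp Require Import classical_sets reals.
From mathcomp Require Import ring lra.
Import Order.TTheory GRing.Theory Num.Theory.
Set Implicit Arguments. Unset Strict Implicit. Unset Printing Implicit Defensive.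
Local Open Scope ring_scope.

(** Compressing the mode-2 and mode-3 factors of the optimal triple,
    [B~ := B U2] and [C~ := C U3], gives an admissible point of the compressed
    problem whose model is exactly the full model built on the projected tensor
    [M^ = M x2 U2 U2^T x3 U3 U3^T] (contraction against [M x2 U2^T x3 U3^T] is
    contraction of [M] against [B~ U2^T = B U2 U2^T]).  Its residual therefore
    exceeds [m_TT] by at most the norm of the model built on [M - M^], which the
    triangle inequality, the bound [||h .* w|| <= ||h||_oo ||w||] and
    Cauchy-Schwarz for [(M - M^) x2 b x3 c] control term by term. *)

Lemma Cauchy_Schwarz_sqr (R : realDomainType) (I : finType) (f g : I -> R) :
  (\sum_i f i * g i) ^+ 2 <= (\sum_i f i ^+ 2) * (\sum_i g i ^+ 2).
Proof.
have Lagrange : \sum_i \sum_j (f i * g j - f j * g i) ^+ 2 =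
   (\sum_i f i ^+ 2) * (\sum_j g j ^+ 2) + (\sum_i g i ^+ 2) * (\sum_j f j ^+ 2)
   - 2 * ((\sum_i f i * g i) * (\sum_j f j * g j)).
  rewrite !big_distrlr /= mulr_sumr -big_split /= -sumrB.
  apply: eq_bigr => i _; rewrite mulr_sumr -big_split /= -sumrB.
  by apply: eq_bigr => j _; ring.
have : 0 <= \sum_i \sum_j (f i * g j - f j * g i) ^+ 2.
  by apply: sumr_ge0 => i _; apply: sumr_ge0 => j _; exact: sqr_ge0.
rewrite Lagrange [(\sum_i g i ^+ 2) * _]mulrC; lra.
Qed.

Lemma Cauchy_Schwarz (R : rcfType) (I : finType) (f g : I -> R) :
  \sum_i f i * g i <= Num.sqrt (\sum_i f i ^+ 2) * Num.sqrt (\sum_i g i ^+ 2).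
Proof.
rewrite -sqrtrM; last by apply: sumr_ge0 => i _; exact: sqr_ge0.
apply: le_trans (ler_norm _) _; rewrite -sqrtr_sqr ler_sqrt ?Cauchy_Schwarz_sqr //.
by rewrite mulr_ge0 // sumr_ge0 // => i _; exact: sqr_ge0.
Qed.

Section ComplexVectors.
Variable R : realType.
Local Notation C := (complex R).

Lemma rcE : @rc R = real_complex R. Proof. by []. Qed.

Lemma cabs0 : cabs (0 : C) = 0.
Proof. by rewrite /cabs /= expr0n /= addr0 sqrtr0. Qed.

Lemma cabs_ge0 (z : C) : 0 <= cabs z.
Proof. by case: z => a b; exact: sqrtr_ge0. Qed.

Lemma cabsD (a b : C) : cabs (a + b) <= cabs a + cabs b.
Proof. exact: le_normcD. Qed.

Lemma cabsM (a b : C) : cabs (a * b) = cabs a * cabs b.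
Proof. exact: Normc.normcM. Qed.

Lemma cabs_rc (r : R) : cabs (rc r) = `|r|.
Proof. by rewrite /cabs /= expr0n /= addr0 sqrtr_sqr. Qed.

Lemma cabs_sum (I : Type) (r : seq I) (P : pred I) (F : I -> C) :
  cabs (\sum_(i <- r | P i) F i) <= \sum_(i <- r | P i) cabs (F i).
Proof.
elim/big_rec2: _ => [|i a b _ IH]; first by rewrite cabs0.
by apply: le_trans (cabsD _ _) _; rewrite lerD2l.
Qed.

Section Norms.
Variable n : nat.
Implicit Types u v w h : 'I_n -> C.

Lemma eq_normFv u v : (forall i, u i = v i) -> normFv u = normFv v.
Proof. by move=> uv; rewrite /normFv; congr Num.sqrt; apply: eq_bigr => i _; rewrite uv. Qed.

Lemma normFv_ge0 u : 0 <= normFv u.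
Proof. exact: sqrtr_ge0. Qed.

Lemma normFv_sqr u : normFv u ^+ 2 = \sum_i cabs (u i) ^+ 2.
Proof. by rewrite sqr_sqrtr // sumr_ge0 // => i _; exact: sqr_ge0. Qed.

Lemma normFv0 : normFv (fun _ : 'I_n => 0 : C) = 0.
Proof. by rewrite /normFv big1 ?sqrtr0 // => i _; rewrite cabs0 expr0n. Qed.

Lemma normFvD u v : normFv (fun i => u i + v i) <= normFv u + normFv v.
Proof.
rewrite {1}/normFv -[normFv u + _]ger0_norm ?addr_ge0 ?normFv_ge0 //.
rewrite -sqrtr_sqr ler_sqrt ?sqr_ge0 // sqrrD !normFv_sqr.
apply: (@le_trans _ _ (\sum_i (cabs (u i) + cabs (v i)) ^+ 2)).
  apply: ler_sum => i _; apply: lerXn2r; rewrite ?nnegrE ?addr_ge0 ?cabs_ge0 //.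
  exact: cabsD.
under eq_bigr do rewrite sqrrD.
rewrite !big_split /= lerD2r lerD2l mulr2n.
have := Cauchy_Schwarz (fun i => cabs (u i)) (fun i => cabs (v i)).
by rewrite -!normFv_sqr !sqrtr_sqr !ger0_norm ?normFv_ge0 // => CS; exact: lerD.
Qed.

Lemma normFv_distD u v w :
  normFv (fun i => u i - w i) <= normFv (fun i => u i - v i) + normFv (fun i => v i - w i).
Proof.
rewrite (@eq_normFv _ (fun i => (u i - v i) + (v i - w i))) => [|i].
  exact: normFvD.
by rewrite addrA subrK.
Qed.

Lemma normFv_sum (I : Type) (r : seq I) (P : pred I) (F : I -> 'I_n -> C) :
  normFv (fun i => \sum_(k <- r | P k) F k i) <= \sum_(k <- r | P k) normFv (F k).
Proof.
elim: r => [|k r IH].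
  by under eq_normFv do rewrite big_nil; rewrite big_nil normFv0.
under eq_normFv do rewrite big_cons; rewrite big_cons.
by case: (P k) => //; apply: le_trans (normFvD _ _) _; rewrite lerD2l.
Qed.

Lemma normInf_ge0 h : 0 <= normInf h.
Proof. exact: bigmax_ge_id. Qed.

Lemma normFv_mul_normInf h w : normFv (fun i => h i * w i) <= normInf h * normFv w.
Proof.
have -> : normInf h * normFv w = Num.sqrt (normInf h ^+ 2 * normFv w ^+ 2).
  by rewrite sqrtrM ?sqr_ge0 // !sqrtr_sqr !ger0_norm ?normInf_ge0 ?normFv_ge0.
rewrite {1}/normFv ler_sqrt; last by rewrite mulr_ge0 ?sqr_ge0.
rewrite normFv_sqr mulr_sumr.
apply: ler_sum => i _; rewrite cabsM exprMn ler_wpM2r ?sqr_ge0 //.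
by apply: lerXn2r; rewrite ?nnegrE ?cabs_ge0 ?normInf_ge0 //; exact: le_bigmax.
Qed.

End Norms.

Section ModeProducts.
Variables N J K : nat.
Implicit Types (T : 'I_N -> 'I_J -> 'I_K -> R) (b : 'I_J -> C) (c : 'I_K -> C).

Lemma eq_mode23 T b b' c c' :
  (forall j, b j = b' j) -> (forall p, c p = c' p) ->
  forall n, mode23 T b c n = mode23 T b' c' n.
Proof.
by move=> bb' cc' n; apply: eq_bigr => j _; apply: eq_bigr => p _; rewrite bb' cc'.
Qed.

Lemma mode23B T T' b c n :
  mode23 (fun n j p => T n j p - T' n j p) b c n = mode23 T b c n - mode23 T' b c n.
Proof.
rewrite /mode23 -sumrB; apply: eq_bigr => j _; rewrite -sumrB; apply: eq_bigr => p _.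
by rewrite rcE rmorphB /= !mulrBl.
Qed.

Lemma cabs_mode23_sqr T b c n :
  cabs (mode23 T b c n) ^+ 2 <=
  (\sum_j \sum_p T n j p ^+ 2) * (normFv b ^+ 2 * normFv c ^+ 2).
Proof.
set S := \sum_(q : 'I_J * 'I_K) `|T n q.1 q.2| * (cabs (b q.1) * cabs (c q.2)).
have mode23_le : cabs (mode23 T b c n) <= S.
  rewrite /S -(pair_bigA _ (fun j p => `|T n j p| * (cabs (b j) * cabs (c p)))).
  apply: le_trans (cabs_sum _ _ _) _; apply: ler_sum => j _.
  apply: le_trans (cabs_sum _ _ _) _; apply: ler_sum => p _.
  by rewrite !cabsM cabs_rc -mulrA.
apply: (@le_trans _ _ (S ^+ 2)).
  by apply: lerXn2r; rewrite // nnegrE ?cabs_ge0 // (le_trans (cabs_ge0 _) mode23_le).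
apply: le_trans (Cauchy_Schwarz_sqr _ _) _.
have -> : \sum_(q : 'I_J * 'I_K) `|T n q.1 q.2| ^+ 2 = \sum_j \sum_p T n j p ^+ 2.
  by rewrite pair_bigA; apply: eq_bigr => q _; rewrite real_normK ?num_real.
have -> : \sum_(q : 'I_J * 'I_K) (cabs (b q.1) * cabs (c q.2)) ^+ 2 =
          normFv b ^+ 2 * normFv c ^+ 2.
  by rewrite !normFv_sqr big_distrlr pair_bigA; apply: eq_bigr => q _; rewrite exprMn.
by [].
Qed.

Lemma normFv_mode23 T b c : normFv (mode23 T b c) <= normF3 T * normFv b * normFv c.
Proof.
have sum3_ge0 : 0 <= \sum_n \sum_j \sum_p T n j p ^+ 2.
  by do 3!(apply: sumr_ge0 => ? _); exact: sqr_ge0.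
have -> : normF3 T * normFv b * normFv c =
          Num.sqrt ((\sum_n \sum_j \sum_p T n j p ^+ 2) * (normFv b ^+ 2 * normFv c ^+ 2)).
  rewrite sqrtrM // sqrtrM ?sqr_ge0 // !sqrtr_sqr !ger0_norm ?normFv_ge0 //.
  by rewrite mulrA.
rewrite {1}/normFv ler_sqrt; last by apply: mulr_ge0 => //; apply: mulr_ge0; exact: sqr_ge0.
by rewrite mulr_suml; apply: ler_sum => n _; exact: cabs_mode23_sqr.
Qed.

End ModeProducts.

Definition mulvr (m k : nat) (b : 'I_m -> C) (Q : 'M[R]_(m, k)) : 'I_k -> C :=
  fun j => \sum_i b i * rc (Q i j).

Lemma mulvrA (m k l : nat) (b : 'I_m -> C) (Q : 'M[R]_(m, k)) (Q' : 'M[R]_(k, l)) j :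
  mulvr (mulvr b Q) Q' j = mulvr b (Q *m Q') j.
Proof.
rewrite /mulvr; under eq_bigr do rewrite mulr_suml.
under [RHS]eq_bigr do rewrite mxE rcE rmorph_sum mulr_sumr.
rewrite exchange_big /=; apply: eq_bigr => i _; apply: eq_bigr => k0 _.
by rewrite rcE rmorphM /= mulrA.
Qed.

Definition slice (N J K : nat) (T : 'I_N -> 'I_J -> 'I_K -> R) n : 'M[C]_(J, K) :=
  \matrix_(j, p) rc (T n j p).

Lemma mode23E (N J K : nat) (T : 'I_N -> 'I_J -> 'I_K -> R) b c n :
  mode23 T b c n = ((\row_j b j) *m slice T n *m (\col_p c p)) 0 0.
Proof.
rewrite /mode23 mxE exchange_big /=; apply: eq_bigr => p _.
rewrite !mxE big_distrl /=; apply: eq_bigr => j _.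
by rewrite /slice !mxE [rc _ * _]mulrC.
Qed.

Lemma slice_mode23mat (N J K J' K' : nat) (T : 'I_N -> 'I_J -> 'I_K -> R)
  (Q2 : 'M[R]_(J', J)) (Q3 : 'M[R]_(K', K)) n :
  slice (mode23mat T Q2 Q3) n = map_mx (@rc R) Q2 *m slice T n *m (map_mx (@rc R) Q3)^T.
Proof.
apply/matrixP => j' p'; rewrite /slice !mxE /mode23mat rcE rmorph_sum.
under eq_bigr do rewrite rmorph_sum.
rewrite exchange_big /=; apply: eq_bigr => p _; rewrite !mxE big_distrl /=.
by apply: eq_bigr => j _; rewrite !mxE !rmorphM /=; ring.
Qed.

Lemma row_mulvr (m k : nat) (b : 'I_m -> C) (Q : 'M[R]_(m, k)) :
  \row_j mulvr b Q j = (\row_i b i) *m map_mx (@rc R) Q.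
Proof. by apply/rowP => j; rewrite !mxE; apply: eq_bigr => i _; rewrite !mxE. Qed.

Lemma col_mulvr (m k : nat) (c : 'I_m -> C) (Q : 'M[R]_(m, k)) :
  \col_j mulvr c Q j = (map_mx (@rc R) Q)^T *m \col_i c i.
Proof. by apply/colP => j; rewrite !mxE; apply: eq_bigr => i _; rewrite !mxE mulrC. Qed.

Lemma mode23_mode23mat (N J K J' K' : nat) (T : 'I_N -> 'I_J -> 'I_K -> R)
  (Q2 : 'M[R]_(J', J)) (Q3 : 'M[R]_(K', K)) (b : 'I_J' -> C) (c : 'I_K' -> C) n :
  mode23 (mode23mat T Q2 Q3) b c n = mode23 T (mulvr b Q2) (mulvr c Q3) n.
Proof. by rewrite !mode23E slice_mode23mat row_mulvr col_mulvr !mulmxA. Qed.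

Section Model.
Variables (N M1 J K R1 R2 : nat) (H : 'M[C]_(N, M1)) (A : 'M[C]_(M1, R1)).
Implicit Types (T : 'I_N -> 'I_J -> 'I_K -> R) (B : 'I_R1 -> 'I_J -> 'I_R2 -> C)
  (Cm : 'M[C]_(R2, K)).

Lemma modelB T T' B Cm n :
  model H (fun n j p => T n j p - T' n j p) A B Cm n =
  model H T A B Cm n - model H T' A B Cm n.
Proof.
rewrite /model -sumrB; apply: eq_bigr => r1 _; rewrite -sumrB.
by apply: eq_bigr => r2 _; rewrite mode23B mulrBr.
Qed.

Lemma normFv_model T B Cm :
  normFv (model H T A B Cm) <=
  normF3 T * \sum_(r1 < R1) \sum_(r2 < R2)
    (normInf (fun n => (H *m A) n r1) * normFv (fun j => B r1 j r2)
     * normFv (fun p => Cm r2 p)).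
Proof.
apply: le_trans (normFv_sum _ _ _) _; rewrite mulr_sumr; apply: ler_sum => r1 _.
apply: le_trans (normFv_sum _ _ _) _; rewrite mulr_sumr; apply: ler_sum => r2 _.
apply: le_trans (normFv_mul_normInf _ _) _.
rewrite mulrCA -!mulrA ler_wpM2l ?normInf_ge0 // mulrCA mulrA.
exact: normFv_mode23.
Qed.

End Model.

Lemma model_compress (N M1 J K J' K' R1 R2 : nat) (H : 'M[C]_(N, M1))
  (T : 'I_N -> 'I_J -> 'I_K -> R) (U2 : 'M[R]_(J, J')) (U3 : 'M[R]_(K, K'))
  (A : 'M[C]_(M1, R1)) (B : 'I_R1 -> 'I_J -> 'I_R2 -> C) (Cm : 'M[C]_(R2, K)) n :
  model H (mode23mat T U2^T U3^T) A
        (fun r1 j' r2 => mulvr (fun j => B r1 j r2) U2 j') (Cm *m map_mx (@rc R) U3) n =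
  model H (mode23mat T (U2 *m U2^T) (U3 *m U3^T)) A B Cm n.
Proof.
apply: eq_bigr => r1 _; apply: eq_bigr => r2 _; congr (_ * _).
rewrite !mode23_mode23mat; apply: eq_mode23 => [j|p]; first exact: mulvrA.
rewrite -mulvrA; apply: eq_bigr => p' _; congr (_ * _).
by rewrite !mxE; apply: eq_bigr => k _; rewrite mxE.
Qed.

End ComplexVectors.

Local Open Scope classical_set_scope.

Theorem theorem2 (R : realType) (N M1 M2 P R1 R2 Mt2 Pt : nat)
  (x y : int -> complex R) (t0 : int)
  (U2 : 'M[R]_(M2, Mt2)) (U3 : 'M[R]_(P, Pt))
  (Astar : 'M[complex R]_(M1, R1))
  (Bstar : 'I_R1 -> 'I_M2 -> 'I_R2 -> complex R)
  (Cstar : 'M[complex R]_(R2, P)) :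
  (0 < N)%N -> (0 < M1)%N -> (0 < M2)%N -> (0 < P)%N ->
  (0 < R1)%N -> (0 < R2)%N -> (0 < Mt2)%N -> (0 < Pt)%N ->
  (Mt2 <= M2)%N -> (Pt <= P)%N ->
  U2^T *m U2 = 1%:M -> U3^T *m U3 = 1%:M ->
  let yv := @yvec R N y t0 in
  let H := @Hmat R N M1 x t0 in
  let Mt := @Mten R N M2 P x t0 in
  let Mtil := mode23mat Mt U2^T U3^T in
  let Mhat := mode23mat Mt (U2 *m U2^T) (U3 *m U3^T) in
  (forall (A : 'M[complex R]_(M1, R1))
          (B : 'I_R1 -> 'I_M2 -> 'I_R2 -> complex R)
          (Cm : 'M[complex R]_(R2, P)),
      residual yv H Mt Astar Bstar Cstar <= residual yv H Mt A B Cm) ->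
  inf [set r : R | exists (A : 'M[complex R]_(M1, R1))
                          (Bt : 'I_R1 -> 'I_Mt2 -> 'I_R2 -> complex R)
                          (Ct : 'M[complex R]_(R2, Pt)),
                     r = residual yv H Mtil A Bt Ct]
  <= residual yv H Mt Astar Bstar Cstar
     + normF3 (fun n j p => Mt n j p - Mhat n j p)
       * \sum_(r1 < R1) \sum_(r2 < R2)
           (normInf (fun n => (H *m Astar) n r1)
            * normFv (fun j => Bstar r1 j r2)
            * normFv (fun p => Cstar r2 p)).
Proof.
move=> _ _ _ _ _ _ _ _ _ _ _ _ yv H Mt Mtil Mhat _.
pose Bt r1 j' r2 := mulvr (fun j => Bstar r1 j r2) U2 j'.
pose Ct := Cstar *m map_mx (@rc R) U3.
set S := [set r : R | _].
have S_lb : has_lbound S by exists 0 => r [A [B [Cm ->]]]; exact: normFv_ge0.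
have S_compressed : S (residual yv H Mtil Astar Bt Ct) by exists Astar, Bt, Ct.
apply: le_trans (ge_inf S_lb S_compressed) _.
rewrite /residual; under eq_normFv do rewrite model_compress.
apply: le_trans (normFv_distD _ (model H Mt Astar Bstar Cstar) _) _.
rewrite lerD2l; under eq_normFv do rewrite -modelB.
exact: normFv_model.
Qed.
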